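(* Let $((A_i,B_i))_{i\in\mathbb N}$ be a strictly increasing sequence of oriented separations of a graph $G$ such that $G[B_i]$ is connected for every $i$, and let $\{C,D\}$ be a separation of $G$ of finite order. If the sequence is exhaustive (i.e. $\bigcap_iB_i=\emptyset$), then there is $I\in\mathbb N$ such that either $(C,D)\le(A_i,B_i)$ for all $i\ge I$, or $(D,C)\le(A_i,B_i)$ for all $i\ge I$.
   Context: A separation of $G$ is an unordered pair $\{A,B\}$ of subsets of $V(G)$ with $A\cup B=V(G)$ and no edge between $A\setminus B$ and $B\setminus A$; its order is $|A\cap B|$. Oriented separations are ordered by $(A,B)\le(C,D)$ iff $A\subseteq C$ and $B\supseteq D$. *)

From Stdlib Require Import List Arith.
Import ListNotations.

(* A graph is given by a vertex type V and an adjacency relation adj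
   (assumed symmetric and irreflexive in the theorem). Vertex sets are
   predicates V -> Prop. *)

Definition is_separation {V : Type} (adj : V -> V -> Prop) (A B : V -> Prop) : Prop :=
  (forall v, A v \/ B v) /\
  (forall u v, A u -> ~ B u -> B v -> ~ A v -> ~ adj u v).

Definition finite_set {V : Type} (S : V -> Prop) : Prop :=
  exists l : list V, forall v, S v -> In v l.

Definition finite_order {V : Type} (A B : V -> Prop) : Prop :=
  finite_set (fun v => A v /\ B v).

Definition sep_le {V : Type} (A B C D : V -> Prop) : Prop :=
  (forall v, A v -> C v) /\ (forall v, D v -> B v).

Definition sep_lt {V : Type} (A B C D : V -> Prop) : Prop :=
  sep_le A B C D /\ ~ sep_le C D A B.

Inductive walk_in {V : Type} (adj : V -> V -> Prop) (X : V -> Prop) : V -> V -> Prop :=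
| walk_refl : forall x, X x -> walk_in adj X x x
| walk_step : forall x y z, X x -> adj x y -> walk_in adj X y z -> walk_in adj X x z.

Definition induced_connected {V : Type} (adj : V -> V -> Prop) (X : V -> Prop) : Prop :=
  (exists x, X x) /\ (forall x y, X x -> X y -> walk_in adj X x y).

From Stdlib Require Import List Arith Lia Classical.

(* Along an increasing sequence of oriented separations the
   right-hand sides B_i shrink.  Since the sequence is exhaustive, every
   vertex leaves B_i eventually, so the finitely many vertices of the
   separator C ∩ D have all left B_I for some I.  Then G[B_I] is a connected
   subgraph avoiding C ∩ D; a walk can never cross from C \ D to D \ C, so
   B_I lies entirely in C \ D or entirely in D \ C.  Every later B_i is a
   subset of B_I, and a separation (A_i,B_i) whose B_i lies in C \ D satisfies
   (D,C) <= (A_i,B_i), and symmetrically. *)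

Lemma sep_le_chain_B_antitone {V : Type} (A B : nat -> V -> Prop) :
  (forall i, sep_le (A i) (B i) (A (S i)) (B (S i))) ->
  forall i j, i <= j -> forall v, B j v -> B i v.
Proof.
  intros hle i j Hij; induction Hij as [|j Hij IH]; intros v Hv; auto.
  apply IH, (proj2 (hle j)), Hv.
Qed.

Lemma exhaustive_avoids_list {V : Type} (B : nat -> V -> Prop)
  (hmono : forall i j, i <= j -> forall v, B j v -> B i v)
  (hexh : forall v, ~ (forall i, B i v)) :
  forall l : list V, exists I, forall v, In v l -> ~ B I v.
Proof.
  induction l as [|a l [I HI]].
  - exists 0. intros v [].
  - destruct (not_all_ex_not _ _ (hexh a)) as [k Hk].
    exists (I + k). intros v [<- | Hv] Hb.
    + apply Hk, (hmono k (I + k)); [lia | exact Hb].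
    + apply (HI v Hv), (hmono I (I + k)); [lia | exact Hb].
Qed.

Lemma is_separation_sym {V : Type} (adj : V -> V -> Prop)
  (adj_sym : forall u v, adj u v -> adj v u) (P Q : V -> Prop) :
  is_separation adj P Q -> is_separation adj Q P.
Proof.
  intros [Hcov Hno]. split.
  - intro v. destruct (Hcov v); auto.
  - intros u v Qu nPu Pv nQv Hadj. apply (Hno v u); auto.
Qed.

Lemma walk_stays_on_side {V : Type} (adj : V -> V -> Prop) (P Q X : V -> Prop) :
  is_separation adj P Q ->
  (forall v, X v -> P v -> Q v -> False) ->
  forall x y, walk_in adj X x y -> P x -> ~ Q x -> P y /\ ~ Q y.
Proof.
  intros [Hcov Hno] Havoid x y W.
  induction W as [x Hx | x y z Hx Hadj W IHW]; intros Px nQx; auto.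
  assert (Xy : X y) by (destruct W; assumption).
  destruct (Hcov y) as [Py | Qy].
  - apply IHW; [exact Py |]. intro Qy. exact (Havoid y Xy Py Qy).
  - exfalso. apply (Hno x y); auto. intro Py. exact (Havoid y Xy Py Qy).
Qed.

Lemma connected_on_one_side {V : Type} (adj : V -> V -> Prop)
  (adj_sym : forall u v, adj u v -> adj v u) (P Q X : V -> Prop) :
  is_separation adj P Q ->
  induced_connected adj X ->
  (forall v, X v -> P v -> Q v -> False) ->
  (forall y, X y -> P y /\ ~ Q y) \/ (forall y, X y -> Q y /\ ~ P y).
Proof.
  intros Hsep [[x Hx] Hwalk] Havoid.
  destruct (proj1 Hsep x) as [Px | Qx].
  - left. intros y Hy.
    apply (walk_stays_on_side adj P Q X Hsep Havoid x y (Hwalk x y Hx Hy) Px).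
    intro Qx. exact (Havoid x Hx Px Qx).
  - right. intros y Hy.
    apply (walk_stays_on_side adj Q P X (is_separation_sym adj adj_sym P Q Hsep)
             (fun v Xv Qv Pv => Havoid v Xv Pv Qv) x y (Hwalk x y Hx Hy) Qx).
    intro Px. exact (Havoid x Hx Px Qx).
Qed.

Lemma sep_le_of_strict_side {V : Type} (A B P Q : V -> Prop) :
  (forall v, A v \/ B v) ->
  (forall v, B v -> P v /\ ~ Q v) ->
  sep_le Q P A B.
Proof.
  intros Hcov Hside. split.
  - intros v Qv. destruct (Hcov v) as [Av | Bv]; auto.
    exfalso. exact (proj2 (Hside v Bv) Qv).
  - intros v Bv. exact (proj1 (Hside v Bv)).
Qed.

Theorem mainTheorem9 (V : Type) (adj : V -> V -> Prop)
  (adj_sym : forall u v, adj u v -> adj v u)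
  (adj_irrefl : forall v, ~ adj v v)
  (A B : nat -> V -> Prop)
  (hsep : forall i, is_separation adj (A i) (B i))
  (hinc : forall i, sep_lt (A i) (B i) (A (S i)) (B (S i)))
  (hconn : forall i, induced_connected adj (B i))
  (C D : V -> Prop)
  (hCD : is_separation adj C D)
  (hfin : finite_order C D)
  (hexh : forall v, ~ (forall i, B i v)) :
  exists I : nat,
    (forall i, I <= i -> sep_le C D (A i) (B i)) \/
    (forall i, I <= i -> sep_le D C (A i) (B i)).
Proof.
  pose proof (sep_le_chain_B_antitone A B (fun i => proj1 (hinc i))) as hmono.
  destruct hfin as [l Hl].
  destruct (exhaustive_avoids_list B hmono hexh l) as [I HI].
  assert (Havoid : forall v, B I v -> C v -> D v -> False)
    by (intros v Bv Cv Dv; exact (HI v (Hl v (conj Cv Dv)) Bv)).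
  exists I.
  destruct (connected_on_one_side adj adj_sym C D (B I) hCD (hconn I) Havoid)
    as [HinC | HinD].
  - right. intros i Hi.
    apply (sep_le_of_strict_side _ _ C D (proj1 (hsep i))).
    intros v Bv. exact (HinC v (hmono I i Hi v Bv)).
  - left. intros i Hi.
    apply (sep_le_of_strict_side _ _ D C (proj1 (hsep i))).
    intros v Bv. exact (HinD v (hmono I i Hi v Bv)).
Qed.
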